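(* Let $f(\pi)=\pi f_1(0,\pi)+(1-\pi)f_0(0,\pi)$ be a $k$-equilibrium continuous-time dynamics with stable equilibria $\pi^{\mathfrak e}_1\le\dots\le\pi^{\mathfrak e}_k$ and basins $I_1,\dots,I_k$. Work in continuous time, with group $A$ initially advantaged, $\pi_0(1|B)\in I_i$, $\pi_0(1|A)\in I_j$ (so $i\le j$). Under the unconstrained policy UN, $(\pi_t(1|A),\pi_t(1|B))\to(\pi^{\mathfrak e}_j,\pi^{\mathfrak e}_i)$ and $U_t(UN)\to u(1)\big(g_A\pi^{\mathfrak e}_j+(1-g_A)\pi^{\mathfrak e}_i\big)$. Moreover: (i) If the AA1 policy is applied at all times and $L_{AA1}:=\max_{\pi\in[0,1]}|f_1(0,\pi)-f_0(0,\pi)|<1$, then both profiles converge to $\pi^{\mathfrak e}_i$ and $\lim_tU_t(AA1)=u(1)\pi^{\mathfrak e}_i\le\lim_tU_t(UN)$. (ii) If $f_1,f_0$ are $\ell_1$-Lipschitz with constants $L_1,L_0$, the AA2 policy is applied at all times, and $L_{AA2}:=\max_{0\le\Delta\le\pi\le1}\big(2[\pi L_1+(1-\pi)L_0]+|f_1(\Delta,\pi-\Delta)-f_0(\Delta,\pi-\Delta)|\big)<1$, then both profiles converge to $\pi^{\mathfrak e}_j$ and $\lim_tU_t(AA2)=u(1)\pi^{\mathfrak e}_j\ge\lim_tU_t(UN)$. Here $U_t(P)$ is the institutional utility of policy $P$ evaluated on the profiles at time $t$ of the trajectory generated by $P$ from the given initial profiles.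
   Context: Two groups $A,B$ with fractions $g_A\in[0,1]$, $g_B=1-g_A$; $\neg j$ is the other group. Group $j$ has profile $\pi_t(1|j)\in[0,1]$, $\pi_t(0|j)=1-\pi_t(1|j)$. Policy $\tau(v;j)\in[0,1]$; utilities $u(0)\le0\le u(1)$; $U_t(\tau)=\sum_jg_j\sum_vu(v)\tau(v;j)\pi_t(v|j)$. Selection rates $\beta_t(v;j)=\tau(v;j)\pi_t(v|j)$. Dynamics: continuously differentiable $f_0,f_1:[0,1]^2\to[0,1]$; continuous time $\frac{d}{dt}\pi_t(1|j)=\pi_t(1|j)(f_1(\beta_t(0;j),\beta_t(1;j))-1)+(1-\pi_t(1|j))f_0(\beta_t(0;j),\beta_t(1;j))$, policy determined by current profiles. UN: $\tau(1;j)=1,\tau(0;j)=0$, so each group follows $\dot\pi=f(\pi)-\pi$. Definition: $f$ is a $k$-equilibrium CT dynamics if it is continuously differentiable with fixed points $\pi^{\mathfrak e}_1\le\dots\le\pi^{\mathfrak e}_k$ and fixed points $\delta_i\in(\pi^{\mathfrak e}_i,\pi^{\mathfrak e}_{i+1})$, $i=1,\dots,k-1$, such that with basins $I_1=[0,\delta_1)$, $I_i=(\delta_{i-1},\delta_i)$ for $1<i<k$, $I_k=(\delta_{k-1},1]$ ($I_1=[0,1]$ if $k=1$), every solution of $\dot\pi=f(\pi)-\pi$ started in $I_i$ converges to $\pi^{\mathfrak e}_i$. Group $j$ is advantaged at $t$ if $\pi_t(1|j)\ge\pi_t(1|\neg j)$. AA1 w.r.t. advantaged $j$: $\tau(1;j)=\pi_t(1|\neg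 j)/\pi_t(1|j)$, $\tau(0;j)=0$, $\tau(1;\neg j)=1$, $\tau(0;\neg j)=0$. AA2 w.r.t. advantaged $j$: $\tau(1;j)=\tau(1;\neg j)=1$, $\tau(0;j)=0$, $\tau(0;\neg j)=(\pi_t(1|j)-\pi_t(1|\neg j))/(1-\pi_t(1|\neg j))$. ''Applied at all times'': w.r.t. the currently advantaged group. ''$\ell_1$-Lipschitz with constant $L_i$'': $|f_i(x_1,x_2)-f_i(y_1,y_2)|\le L_i(|x_1-y_1|+|x_2-y_2|)$. *)

From Stdlib Require Import Reals Lra Lia.
Open Scope R_scope.

Inductive group := GA | GB.
Definition other (j : group) : group := match j with GA => GB | GB => GA end.
Definition geqb (g h : group) : bool :=
  match g, h with GA, GA | GB, GB => true | _, _ => false end.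

(* a profile: p j = pi(1|j) *)
Definition profile := group -> R.
(* a policy: tau v j, with v = true for v=1, v = false for v=0 *)
Definition policy := bool -> group -> R.

Definition I01 (x : R) : Prop := 0 <= x <= 1.

Definition pi_of (p : profile) (v : bool) (j : group) : R :=
  if v then p j else 1 - p j.

Definition grp_frac (gA : R) (j : group) : R :=
  match j with GA => gA | GB => 1 - gA end.

Definition util (u0 u1 : R) (v : bool) : R := if v then u1 else u0.

Definition Util (gA u0 u1 : R) (tau : policy) (p : profile) : R :=
  grp_frac gA GA * (util u0 u1 false * tau false GA * pi_of p false GA
                    + util u0 u1 true * tau true GA * pi_of p true GA)
  + grp_frac gA GB * (util u0 u1 false * tau false GB * pi_of p false GB
                    + util u0 u1 true * tau true GB * pi_of p true GB).

Definition beta (tau : policy) (p : profile) (v : bool) (j : group) : R :=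
  tau v j * pi_of p v j.

(* continuous-time right-hand side of d/dt pi_t(1|j) *)
Definition rhs (f0 f1 : R -> R -> R) (tau : policy) (p : profile) (j : group) : R :=
  p j * (f1 (beta tau p false j) (beta tau p true j) - 1)
  + (1 - p j) * f0 (beta tau p false j) (beta tau p true j).

Definition UN (p : profile) : policy := fun v _ => if v then 1 else 0.

(* the currently advantaged group (ties: A; at ties both AA-policies
   coincide for either choice) *)
Definition adv (p : profile) : group := if Rle_dec (p GB) (p GA) then GA else GB.

Definition AA1_wrt (j : group) (p : profile) : policy :=
  fun v g => if v then (if geqb g j then p (other j) / p j else 1)
             else 0.
Definition AA2_wrt (j : group) (p : profile) : policy :=
  fun v g => if v then 1
             else (if geqb g j then 0
                   else (p j - p (other j)) / (1 - p (other j))).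

(* applied at all times: w.r.t. the currently advantaged group *)
Definition AA1 (p : profile) : policy := AA1_wrt (adv p) p.
Definition AA2 (p : profile) : policy := AA2_wrt (adv p) p.

Definition derivable_within (g : R -> R) (D : R -> Prop) (x l : R) : Prop :=
  forall eps, 0 < eps -> exists delta, 0 < delta /\
    forall h, h <> 0 -> Rabs h < delta -> D (x + h) ->
      Rabs ((g (x + h) - g x) / h - l) < eps.

Definition continuous_within (g : R -> R) (D : R -> Prop) : Prop :=
  forall x, D x -> forall eps, 0 < eps -> exists delta, 0 < delta /\
    forall y, D y -> Rabs (y - x) < delta -> Rabs (g y - g x) < eps.

Definition continuous_on_square (g : R -> R -> R) : Prop :=
  forall x1 x2, I01 x1 -> I01 x2 -> forall eps, 0 < eps -> exists delta, 0 < delta /\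
    forall y1 y2, I01 y1 -> I01 y2 -> Rabs (y1 - x1) < delta -> Rabs (y2 - x2) < delta ->
      Rabs (g y1 y2 - g x1 x2) < eps.

Definition C1_on_I01 (f : R -> R) : Prop :=
  exists df : R -> R,
    (forall x, I01 x -> derivable_within f I01 x (df x)) /\ continuous_within df I01.

Definition C1_square_to_I01 (g : R -> R -> R) : Prop :=
  (forall x1 x2, I01 x1 -> I01 x2 -> I01 (g x1 x2)) /\
  exists d1 d2 : R -> R -> R,
    (forall x1 x2, I01 x1 -> I01 x2 ->
        derivable_within (fun s => g s x2) I01 x1 (d1 x1 x2) /\
        derivable_within (fun s => g x1 s) I01 x2 (d2 x1 x2)) /\
    continuous_on_square d1 /\ continuous_on_square d2.

Definition l1_Lipschitz (g : R -> R -> R) (L : R) : Prop :=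
  forall x1 x2 y1 y2, I01 x1 -> I01 x2 -> I01 y1 -> I01 y2 ->
    Rabs (g x1 x2 - g y1 y2) <= L * (Rabs (x1 - y1) + Rabs (x2 - y2)).

Definition right_cont0 (h : R -> R) : Prop :=
  forall eps, 0 < eps -> exists delta, 0 < delta /\
    forall t, 0 <= t < delta -> Rabs (h t - h 0) < eps.

Definition traj1 (f : R -> R) (p : R -> R) : Prop :=
  (forall t, 0 <= t -> I01 (p t)) /\ right_cont0 p /\
  (forall t, 0 < t -> derivable_pt_lim p t (f (p t) - p t)).

Definition traj2 (f0 f1 : R -> R -> R) (Pol : profile -> policy)
  (x : R -> profile) : Prop :=
  forall j : group,
    (forall t, 0 <= t -> I01 (x t j)) /\ right_cont0 (fun t => x t j) /\
    (forall t, 0 < t -> derivable_pt_lim (fun s => x s j) t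
                          (rhs f0 f1 (Pol (x t)) (x t) j)).

Definition cv_t (h : R -> R) (l : R) : Prop :=
  forall eps, 0 < eps -> exists T, forall t, T <= t -> Rabs (h t - l) < eps.

(* basins (1-based indices): I_1 = [0,d_1), I_i = (d_{i-1},d_i), I_k = (d_{k-1},1] *)
Definition in_basin (k : nat) (d : nat -> R) (i : nat) (x : R) : Prop :=
  I01 x /\ ((1 < i)%nat -> d (i - 1)%nat < x) /\ ((i < k)%nat -> x < d i).

(* f is a k-equilibrium CT dynamics with equilibria pe 1..k and
   separating fixed points d 1..k-1 *)
Definition k_equilibrium (f : R -> R) (k : nat) (pe d : nat -> R) : Prop :=
  (1 <= k)%nat /\ C1_on_I01 f /\
  (forall i, (1 <= i <= k)%nat -> I01 (pe i) /\ f (pe i) = pe i) /\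
  (forall i, (1 <= i < k)%nat -> pe i <= pe (S i)) /\
  (forall i, (1 <= i < k)%nat -> pe i < d i < pe (S i) /\ f (d i) = d i) /\
  (forall i, (1 <= i <= k)%nat -> forall p, traj1 f p ->
     in_basin k d i (p 0) -> cv_t p (pe i)).

(* "max_{x in S} F x < 1": the maximum exists and is < 1 *)
Definition max_lt1 (S : R -> R -> Prop) (F : R -> R -> R) : Prop :=
  exists L, L < 1 /\ (exists a b, S a b /\ F a b = L) /\
    (forall a b, S a b -> F a b <= L).

(* Under AA1 both groups are selected at rate min(pi_A, pi_B); under AA2 each
   group's qualified members are all selected and the unqualified ones fill the
   gap up to max(pi_A, pi_B).  In both cases the gap G = pi(1|A) - pi(1|B)
   satisfies -2 G^2 <= G G' <= -(1 - L) G^2 with L the constant assumed < 1.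
   Hence G^2 e^{4t} is nondecreasing, so G never changes sign and A stays
   advantaged, while G^2 e^{2(1-L)t} is nonincreasing, so G -> 0.  With A
   permanently advantaged, B under AA1 and A under AA2 are selected exactly as
   under UN, so they follow the scalar dynamics f and converge to the
   equilibrium of their initial basin; the other group follows because the gap
   vanishes, and the utilities are linear combinations of the two profiles. *)

From Stdlib Require Import Reals Lra Lia Psatz.
Open Scope R_scope.

Lemma Rabs_le_bounds (x y : R) : Rabs x <= y -> - y <= x <= y.
Proof.
  pose proof (Rle_abs x); pose proof (Rle_abs (- x)); rewrite Rabs_Ropp in *; lra.
Qed.

Lemma Rdiv_mul_le (x y : R) : 0 <= y <= x -> y / x * x = y.
Proof.
  intros H; destruct (Req_dec x 0) as [->|Hx].
  - replace y with 0 by lra; unfold Rdiv; ring.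
  - field; exact Hx.
Qed.

Lemma nondecreasing_of_deriv_nonneg (h h' : R -> R) :
  (forall t, 0 < t -> derivable_pt_lim h t (h' t)) ->
  (forall t, 0 < t -> 0 <= h' t) ->
  forall s t, 0 < s -> s < t -> h s <= h t.
Proof.
  intros Hd Hpos s t Hs Hst.
  destruct (MVT_cor2 h h' s t Hst) as [c [Hc Hcst]].
  { intros c Hc; apply Hd; lra. }
  assert (0 <= h' c) by (apply Hpos; lra).
  nra.
Qed.

Lemma nonincreasing_of_deriv_nonpos (h h' : R -> R) :
  (forall t, 0 < t -> derivable_pt_lim h t (h' t)) ->
  (forall t, 0 < t -> h' t <= 0) ->
  forall s t, 0 < s -> s < t -> h t <= h s.
Proof.
  intros Hd Hneg s t Hs Hst.
  enough (- h s <= - h t) by lra.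
  apply (nondecreasing_of_deriv_nonneg (fun u => - h u) (fun u => - h' u)); auto.
  - intros u Hu; apply derivable_pt_lim_opp, Hd, Hu.
  - intros u Hu; specialize (Hneg u Hu); lra.
Qed.

Lemma derivable_pt_lim_sqr_mul_exp (D : R -> R) (c t l : R) :
  derivable_pt_lim D t l ->
  derivable_pt_lim (fun s => D s * D s * exp (c * s)) t
    (2 * exp (c * t) * (D t * l + c / 2 * (D t * D t))).
Proof.
  intros HD.
  assert (Hexp : derivable_pt_lim (fun s => exp (c * s)) t (exp (c * t) * c)).
  { apply (derivable_pt_lim_comp (fun s => c * s) exp t c).
    - pose proof (derivable_pt_lim_scal id c t 1 (derivable_pt_lim_id t)) as Hlin.
      rewrite Rmult_1_r in Hlin; exact Hlin.
    - apply derivable_pt_lim_exp. }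
  replace (2 * exp (c * t) * (D t * l + c / 2 * (D t * D t)))
    with ((l * D t + D t * l) * exp (c * t) + D t * D t * (exp (c * t) * c))
    by field.
  exact (derivable_pt_lim_mult _ _ t _ _ (derivable_pt_lim_mult _ _ t _ _ HD HD) Hexp).
Qed.

Lemma right_cont0_minus (g h : R -> R) :
  right_cont0 g -> right_cont0 h -> right_cont0 (fun t => g t - h t).
Proof.
  intros Hg Hh eps Heps.
  destruct (Hg (eps / 2)) as [dg [Hdg Hg']]; [lra|].
  destruct (Hh (eps / 2)) as [dh [Hdh Hh']]; [lra|].
  exists (Rmin dg dh); split; [now apply Rmin_glb_lt|].
  intros t Ht.
  pose proof (Rmin_l dg dh); pose proof (Rmin_r dg dh).
  specialize (Hg' t ltac:(lra)); specialize (Hh' t ltac:(lra)).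
  apply Rabs_def2 in Hg'; apply Rabs_def2 in Hh'.
  apply Rabs_def1; lra.
Qed.

Lemma right_cont0_small_time (h : R -> R) (eps t : R) :
  right_cont0 h -> 0 < eps -> 0 < t ->
  exists s, 0 < s < t /\ Rabs (h s - h 0) < eps.
Proof.
  intros Hh Heps Ht.
  destruct (Hh eps Heps) as [del [Hdel Hnear]].
  exists (Rmin (del / 2) (t / 2)).
  pose proof (Rmin_l (del / 2) (t / 2)); pose proof (Rmin_r (del / 2) (t / 2)).
  assert (0 < Rmin (del / 2) (t / 2)) by (apply Rmin_glb_lt; lra).
  split; [lra|]; apply Hnear; lra.
Qed.

Lemma cv_t_lincomb (h p1 p2 : R -> R) (c1 c2 l1 l2 : R) :
  cv_t p1 l1 -> cv_t p2 l2 ->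
  (forall t, 0 <= t -> h t = c1 * p1 t + c2 * p2 t) ->
  cv_t h (c1 * l1 + c2 * l2).
Proof.
  intros H1 H2 Hh eps Heps.
  set (K := Rabs c1 + Rabs c2 + 1).
  pose proof (Rabs_pos c1); pose proof (Rabs_pos c2).
  assert (HeK : 0 < eps / K) by (apply Rdiv_lt_0_compat; unfold K; lra).
  destruct (H1 _ HeK) as [T1 HT1]; destruct (H2 _ HeK) as [T2 HT2].
  exists (Rmax 0 (Rmax T1 T2)); intros t Ht.
  pose proof (Rmax_l 0 (Rmax T1 T2)); pose proof (Rmax_r 0 (Rmax T1 T2)).
  pose proof (Rmax_l T1 T2); pose proof (Rmax_r T1 T2).
  specialize (HT1 t ltac:(lra)); specialize (HT2 t ltac:(lra)).
  rewrite Hh by lra.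
  replace (c1 * p1 t + c2 * p2 t - (c1 * l1 + c2 * l2))
    with (c1 * (p1 t - l1) + c2 * (p2 t - l2)) by ring.
  eapply Rle_lt_trans; [apply Rabs_triang|]; rewrite !Rabs_mult.
  assert (Rabs c1 * Rabs (p1 t - l1) <= Rabs c1 * (eps / K)) by (apply Rmult_le_compat_l; lra).
  assert (Rabs c2 * Rabs (p2 t - l2) <= Rabs c2 * (eps / K)) by (apply Rmult_le_compat_l; lra).
  assert (eps / K * K = eps) by (field; unfold K; lra).
  unfold K in *; nra.
Qed.

Section DecayingGap.

Variables (D D' : R -> R) (a : R).
Hypothesis a_pos : 0 < a.
Hypothesis D_bounded : forall t, 0 <= t -> -1 <= D t <= 1.
Hypothesis D_right_cont0 : right_cont0 D.
Hypothesis D_deriv : forall t, 0 < t -> derivable_pt_lim D t (D' t).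
Hypothesis D_rate : forall t, 0 < t -> -2 * (D t * D t) <= D t * D' t <= - a * (D t * D t).

Lemma sqr_exp4_nondecreasing s t : 0 < s -> s < t ->
  D s * D s * exp (4 * s) <= D t * D t * exp (4 * t).
Proof.
  apply (nondecreasing_of_deriv_nonneg (fun u => D u * D u * exp (4 * u))
    (fun u => 2 * exp (4 * u) * (D u * D' u + 4 / 2 * (D u * D u)))).
  - intros u Hu; apply derivable_pt_lim_sqr_mul_exp, D_deriv, Hu.
  - intros u Hu; specialize (D_rate u Hu); pose proof (exp_pos (4 * u)).
    apply Rmult_le_pos; lra.
Qed.

Lemma sqr_exp_rate_nonincreasing s t : 0 < s -> s < t ->
  D t * D t * exp (2 * a * t) <= D s * D s * exp (2 * a * s).
Proof.
  apply (nonincreasing_of_deriv_nonpos (fun u => D u * D u * exp (2 * a * u))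
    (fun u => 2 * exp (2 * a * u) * (D u * D' u + 2 * a / 2 * (D u * D u)))).
  - intros u Hu; apply derivable_pt_lim_sqr_mul_exp, D_deriv, Hu.
  - intros u Hu; specialize (D_rate u Hu); pose proof (exp_pos (2 * a * u)).
    enough (0 <= 2 * exp (2 * a * u) * - (D u * D' u + 2 * a / 2 * (D u * D u))) by lra.
    apply Rmult_le_pos; lra.
Qed.

Lemma sqr_nonincreasing s t : 0 < s -> s < t -> D t * D t <= D s * D s.
Proof.
  intros Hs Hst.
  pose proof (sqr_exp_rate_nonincreasing s t Hs Hst).
  assert (exp (2 * a * s) < exp (2 * a * t)) by (apply exp_increasing; nra).
  pose proof (exp_pos (2 * a * s)).
  nra.
Qed.

Lemma gap_zero_forever : D 0 = 0 -> forall t, 0 < t -> D t = 0.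
Proof.
  intros HD0 t Ht.
  destruct (Req_dec (D t) 0) as [|Hnz]; [assumption | exfalso].
  destruct (right_cont0_small_time D (Rabs (D t)) t D_right_cont0)
    as [s [Hs Hsmall]]; [now apply Rabs_pos_lt | exact Ht |].
  rewrite HD0, Rminus_0_r in Hsmall.
  assert (Rabs (D t) <= Rabs (D s)).
  { apply Rsqr_le_abs_0; unfold Rsqr; apply sqr_nonincreasing; lra. }
  lra.
Qed.

Lemma gap_pos_never_zero : 0 < D 0 -> forall t, 0 < t -> D t <> 0.
Proof.
  intros HD0 t Ht Hzero.
  destruct (right_cont0_small_time D (D 0) t D_right_cont0 HD0 Ht) as [s [Hs Hsmall]].
  apply Rabs_def2 in Hsmall.
  pose proof (sqr_exp4_nondecreasing s t ltac:(lra) ltac:(lra)).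
  rewrite Hzero in *.
  pose proof (exp_pos (4 * s)).
  assert (0 < D s * D s * exp (4 * s)) by (apply Rmult_lt_0_compat; nra).
  lra.
Qed.

Lemma gap_nonneg : 0 <= D 0 -> forall t, 0 <= t -> 0 <= D t.
Proof.
  intros HD0 t Ht.
  destruct (Req_dec t 0) as [->|Htn]; [exact HD0|].
  destruct (Req_dec (D 0) 0) as [Hz|Hnz].
  { rewrite (gap_zero_forever Hz t); lra. }
  destruct (Rle_dec 0 (D t)) as [|Hneg]; [assumption | exfalso].
  destruct (right_cont0_small_time D (D 0) t D_right_cont0)
    as [s [Hs Hsmall]]; [lra | lra |].
  apply Rabs_def2 in Hsmall.
  destruct (Ranalysis5.IVT_interv (fun u => - D u) s t) as [z [Hz Hzero]];
    [| lra | lra | lra |].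
  - intros u Hu; apply continuity_pt_opp, derivable_continuous_pt.
    exists (D' u); apply D_deriv; lra.
  - apply (gap_pos_never_zero ltac:(lra) z); lra.
Qed.

(* Quantitatively: [D t^2 e^{2a(t-1)} <= D 1^2 <= 1] and [e^x > 1 + x]. *)
Lemma gap_cv0 : cv_t D 0.
Proof.
  intros eps Heps.
  assert (Hk : 0 < 2 * a * (eps * eps)) by (apply Rmult_lt_0_compat; nra).
  exists (2 + / (2 * a * (eps * eps))); intros t Ht.
  pose proof (Rinv_0_lt_compat _ Hk).
  assert (Hdecay : D t * D t * exp (2 * a * (t - 1)) <= 1).
  { pose proof (sqr_exp_rate_nonincreasing 1 t ltac:(lra) ltac:(lra)) as Hdec.
    pose proof (D_bounded 1 ltac:(lra)).
    replace (2 * a * t) with (2 * a * (t - 1) + 2 * a * 1) in Hdec by ring.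
    rewrite exp_plus in Hdec.
    assert (D 1 * D 1 * exp (2 * a * 1) <= 1 * exp (2 * a * 1)).
    { apply Rmult_le_compat_r; [apply Rlt_le, exp_pos | nra]. }
    apply (Rmult_le_reg_r (exp (2 * a * 1))); [apply exp_pos | rewrite Rmult_assoc; lra]. }
  assert (Hgrow : 1 < 2 * a * (t - 1) * (eps * eps)).
  { assert (Hinv : / (2 * a * (eps * eps)) * (2 * a * (eps * eps)) = 1) by (field; lra).
    nra. }
  pose proof (exp_ineq1 (2 * a * (t - 1)) ltac:(nra)).
  set (E := exp (2 * a * (t - 1))) in *.
  assert (HE : 1 < E * (eps * eps)).
  { assert (0 <= (E - (1 + 2 * a * (t - 1))) * (eps * eps)) by (apply Rmult_le_pos; nra).
    nra. }
  assert (Rsqr (D t) < Rsqr eps).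
  { unfold Rsqr; apply (Rmult_lt_reg_r E); [unfold E; apply exp_pos | lra]. }
  rewrite Rminus_0_r, <- (Rabs_right eps) by lra.
  now apply Rsqr_lt_abs_0.
Qed.

End DecayingGap.

Definition fUN (f0 f1 : R -> R -> R) (p : R) : R := p * f1 0 p + (1 - p) * f0 0 p.

Definition drift (f0 f1 : R -> R -> R) (x y p : R) : R :=
  p * (f1 x y - 1) + (1 - p) * f0 x y.

Lemma rhs_drift f0 f1 (tau : policy) (P : profile) (g : group) :
  rhs f0 f1 tau P g = drift f0 f1 (beta tau P false g) (beta tau P true g) (P g).
Proof. reflexivity. Qed.

Lemma drift_UN f0 f1 p : drift f0 f1 0 p p = fUN f0 f1 p - p.
Proof. unfold drift, fUN; ring. Qed.

Lemma Util_beta gA u0 u1 (tau : policy) (P : profile) :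
  Util gA u0 u1 tau P =
  gA * (u0 * beta tau P false GA + u1 * beta tau P true GA)
  + (1 - gA) * (u0 * beta tau P false GB + u1 * beta tau P true GB).
Proof. unfold Util, beta, grp_frac, util; ring. Qed.

Lemma beta_UN (P : profile) g :
  beta (UN P) P false g = 0 /\ beta (UN P) P true g = P g.
Proof. unfold beta, UN, pi_of; split; ring. Qed.

Lemma beta_AA1 (P : profile) g : I01 (P GA) -> I01 (P GB) ->
  beta (AA1 P) P false g = 0 /\ beta (AA1 P) P true g = Rmin (P GA) (P GB).
Proof.
  unfold I01, beta, AA1, AA1_wrt, adv, pi_of; intros HA HB.
  destruct (Rle_dec (P GB) (P GA)); destruct g; simpl;
    rewrite ?Rdiv_mul_le by lra; split;
    solve [ring | rewrite Rmin_right by lra; ring | rewrite Rmin_left by lra; ring].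
Qed.

Lemma beta_AA2 (P : profile) g : I01 (P GA) -> I01 (P GB) ->
  beta (AA2 P) P false g = Rmax (P GA) (P GB) - P g /\ beta (AA2 P) P true g = P g.
Proof.
  unfold I01, beta, AA2, AA2_wrt, adv, pi_of; intros HA HB.
  destruct (Rle_dec (P GB) (P GA)); destruct g; simpl;
    rewrite ?Rdiv_mul_le by lra; split;
    solve [ring | rewrite Rmax_left by lra; ring | rewrite Rmax_right by lra; ring].
Qed.

Definition gap_contracting (f0 f1 : R -> R -> R) (Pol : profile -> policy) (a : R) :=
  forall P : profile, I01 (P GA) -> I01 (P GB) ->
    -2 * ((P GA - P GB) * (P GA - P GB))
    <= (P GA - P GB) * (rhs f0 f1 (Pol P) P GA - rhs f0 f1 (Pol P) P GB)
    <= - a * ((P GA - P GB) * (P GA - P GB)).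

(* [G] is the gap and [X] the difference of the drifts; the policies make [X]
   equal to [-G] up to a relative error [L]. *)
Lemma gap_rate_of_perturbation (G X L : R) :
  L <= 1 -> Rabs (X + G) <= L * Rabs G ->
  -2 * (G * G) <= G * X <= - (1 - L) * (G * G).
Proof.
  intros HL Hpert.
  assert (Hprod : Rabs (G * (X + G)) <= L * (G * G)).
  { rewrite Rabs_mult, <- (Rabs_pos_eq (G * G)) by apply Rle_0_sqr.
    rewrite Rabs_mult; replace (L * (Rabs G * Rabs G)) with (Rabs G * (L * Rabs G)) by ring.
    apply Rmult_le_compat_l; [apply Rabs_pos | exact Hpert]. }
  apply Rabs_le_bounds in Hprod.
  pose proof (Rle_0_sqr G); unfold Rsqr in *.
  split; nra.
Qed.

Lemma AA1_gap_contracting f0 f1 L :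
  (forall p, I01 p -> Rabs (f1 0 p - f0 0 p) <= L) -> L <= 1 ->
  gap_contracting f0 f1 AA1 (1 - L).
Proof.
  intros Hbound HL P HA HB.
  apply gap_rate_of_perturbation; [exact HL|].
  rewrite !rhs_drift.
  destruct (beta_AA1 P GA HA HB) as [-> ->], (beta_AA1 P GB HA HB) as [-> ->].
  set (m := Rmin (P GA) (P GB)).
  assert (Hm : I01 m) by (unfold m, Rmin, I01 in *; destruct Rle_dec; lra).
  replace (drift f0 f1 0 m (P GA) - drift f0 f1 0 m (P GB) + (P GA - P GB))
    with ((P GA - P GB) * (f1 0 m - f0 0 m)) by (unfold drift; ring).
  rewrite Rabs_mult, Rmult_comm.
  apply Rmult_le_compat_r; [apply Rabs_pos | exact (Hbound m Hm)].
Qed.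

(* Under AA2 the advantaged group is selected at [(0, p)] and the other one at
   [(p - q, q)], two points at l1 distance [2 (p - q)]. *)
Lemma AA2_drift_perturbation f0 f1 L1 L0 L p q :
  l1_Lipschitz f1 L1 -> l1_Lipschitz f0 L0 ->
  (forall D p, 0 <= D /\ D <= p /\ p <= 1 ->
     2 * (p * L1 + (1 - p) * L0) + Rabs (f1 D (p - D) - f0 D (p - D)) <= L) ->
  0 <= q -> q <= p -> p <= 1 ->
  Rabs (drift f0 f1 0 p p - drift f0 f1 (p - q) q q + (p - q)) <= L * (p - q).
Proof.
  intros Hlip1 Hlip0 Hmax Hq Hqp Hp.
  set (D := p - q).
  assert (HD : 0 <= D) by (unfold D; lra).
  assert (HL := Hmax D p ltac:(unfold D; lra)).
  replace (p - D) with q in HL by (unfold D; ring).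
  assert (Hdist : Rabs (0 - D) + Rabs (p - q) = 2 * D).
  { rewrite Rabs_left1, Rabs_pos_eq; unfold D; lra. }
  assert (H1 := Hlip1 0 p D q); assert (H0 := Hlip0 0 p D q).
  rewrite Hdist in H1, H0.
  specialize (H1 ltac:(split; lra) ltac:(split; lra) ltac:(unfold D; split; lra)
                 ltac:(split; lra)).
  specialize (H0 ltac:(split; lra) ltac:(split; lra) ltac:(unfold D; split; lra)
                 ltac:(split; lra)).
  replace (drift f0 f1 0 p p - drift f0 f1 D q q + D)
    with (p * (f1 0 p - f1 D q) + (1 - p) * (f0 0 p - f0 D q) + D * (f1 D q - f0 D q))
    by (unfold drift, D; ring).
  assert (p * Rabs (f1 0 p - f1 D q) <= p * (L1 * (2 * D))) by (apply Rmult_le_compat_l; lra).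
  assert ((1 - p) * Rabs (f0 0 p - f0 D q) <= (1 - p) * (L0 * (2 * D)))
    by (apply Rmult_le_compat_l; lra).
  assert (D * Rabs (f1 D q - f0 D q) <= D * (L - 2 * (p * L1 + (1 - p) * L0)))
    by (apply Rmult_le_compat_l; lra).
  eapply Rle_trans; [apply Rabs_triang|].
  eapply Rle_trans; [apply Rplus_le_compat_r, Rabs_triang|].
  rewrite !Rabs_mult, (Rabs_pos_eq p), (Rabs_pos_eq (1 - p)), (Rabs_pos_eq D) by lra.
  lra.
Qed.

Lemma AA2_gap_contracting f0 f1 L1 L0 L :
  l1_Lipschitz f1 L1 -> l1_Lipschitz f0 L0 ->
  (forall D p, 0 <= D /\ D <= p /\ p <= 1 ->
     2 * (p * L1 + (1 - p) * L0) + Rabs (f1 D (p - D) - f0 D (p - D)) <= L) ->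
  L <= 1 -> gap_contracting f0 f1 AA2 (1 - L).
Proof.
  intros Hlip1 Hlip0 Hmax HL P HA HB.
  apply gap_rate_of_perturbation; [exact HL|].
  rewrite !rhs_drift.
  destruct (beta_AA2 P GA HA HB) as [-> ->], (beta_AA2 P GB HA HB) as [-> ->].
  unfold I01 in *.
  destruct (Rle_dec (P GB) (P GA)) as [Hle|Hlt].
  - rewrite Rmax_left, Rminus_diag, (Rabs_pos_eq (P GA - P GB)) by lra.
    now apply (AA2_drift_perturbation f0 f1 L1 L0).
  - rewrite Rmax_right, Rminus_diag, (Rabs_left (P GA - P GB)) by lra.
    rewrite <- Rabs_Ropp.
    replace (- _) with (drift f0 f1 0 (P GB) (P GB) - drift f0 f1 (P GB - P GA) (P GA) (P GA)
                        + (P GB - P GA)) by ring.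
    replace (L * - (P GA - P GB)) with (L * (P GB - P GA)) by ring.
    apply (AA2_drift_perturbation f0 f1 L1 L0); auto; lra.
Qed.

Lemma gap_of_contracting_policy f0 f1 (Pol : profile -> policy) a x :
  gap_contracting f0 f1 Pol a -> 0 < a -> traj2 f0 f1 Pol x -> x 0 GB <= x 0 GA ->
  (forall t, 0 <= t -> x t GB <= x t GA) /\ cv_t (fun t => x t GA - x t GB) 0.
Proof.
  intros Hcontr Ha Hx H0.
  destruct (Hx GA) as [IA [RA DA]], (Hx GB) as [IB [RB DB]].
  set (D := fun t => x t GA - x t GB).
  set (D' := fun t => rhs f0 f1 (Pol (x t)) (x t) GA - rhs f0 f1 (Pol (x t)) (x t) GB).
  assert (Hbounded : forall t, 0 <= t -> -1 <= D t <= 1).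
  { intros t Ht; specialize (IA t Ht); specialize (IB t Ht); unfold D, I01 in *; lra. }
  assert (Hderiv : forall t, 0 < t -> derivable_pt_lim D t (D' t)).
  { intros t Ht; apply (derivable_pt_lim_minus (fun s => x s GA) (fun s => x s GB)); auto. }
  assert (Hrate : forall t, 0 < t -> -2 * (D t * D t) <= D t * D' t <= - a * (D t * D t)).
  { intros t Ht; apply Hcontr; [apply IA | apply IB]; lra. }
  split.
  - intros t Ht.
    pose proof (gap_nonneg D D' a Ha (right_cont0_minus _ _ RA RB) Hderiv Hrate
                  ltac:(unfold D; lra) t Ht).
    unfold D in *; lra.
  - exact (gap_cv0 D D' a Ha Hbounded Hderiv Hrate).
Qed.

Section Trajectories.

Variables (f0 f1 : R -> R -> R) (k : nat) (pe d : nat -> R).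
Hypothesis Hequil : k_equilibrium (fUN f0 f1) k pe d.

Lemma pe_nondecreasing m n : (1 <= m)%nat -> (m <= n <= k)%nat -> pe m <= pe n.
Proof.
  destruct Hequil as [_ [_ [_ [Hstep _]]]]; intros Hm Hmn.
  induction n as [|n IH]; [lia|].
  destruct (Nat.eq_dec m (S n)) as [->|Hne]; [lra|].
  assert (pe m <= pe n) by (apply IH; lia).
  assert (pe n <= pe (S n)) by (apply Hstep; lia).
  lra.
Qed.

Lemma basin_index_le i j a0 b0 :
  (1 <= i <= k)%nat -> (1 <= j <= k)%nat -> b0 <= a0 ->
  in_basin k d i b0 -> in_basin k d j a0 -> (i <= j)%nat.
Proof.
  intros Hi Hj Hab [_ [Hb _]] [_ [_ Ha]].
  destruct (Nat.le_gt_cases i j) as [|Hlt]; [assumption | exfalso].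
  assert (d (i - 1)%nat < b0) by (apply Hb; lia).
  assert (a0 < d j) by (apply Ha; lia).
  enough (d j <= d (i - 1)%nat) by lra.
  destruct (Nat.eq_dec j (i - 1)) as [->|Hne]; [lra|].
  destruct Hequil as [_ [_ [_ [_ [Hsep _]]]]].
  pose proof (Hsep j ltac:(lia)); pose proof (Hsep (i - 1)%nat ltac:(lia)).
  assert (pe (S j) <= pe (i - 1)%nat) by (apply pe_nondecreasing; lia).
  lra.
Qed.

Lemma selected_as_UN_cv (Pol : profile -> policy) x g i :
  traj2 f0 f1 Pol x -> (1 <= i <= k)%nat -> in_basin k d i (x 0 g) ->
  (forall t, 0 < t -> beta (Pol (x t)) (x t) false g = 0 /\
                      beta (Pol (x t)) (x t) true g = x t g) ->
  cv_t (fun t => x t g) (pe i).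
Proof.
  intros Hx Hi Hbasin Hsel.
  destruct Hequil as [_ [_ [_ [_ [_ Hconv]]]]].
  destruct (Hx g) as [Ig [Rg Dg]].
  apply (Hconv i Hi); [|exact Hbasin].
  split; [exact Ig | split; [exact Rg|]].
  intros t Ht.
  specialize (Dg t Ht); rewrite rhs_drift in Dg.
  destruct (Hsel t Ht) as [E0 E1]; rewrite E0, E1, drift_UN in Dg.
  exact Dg.
Qed.

Lemma UN_limits gA u0 u1 i j x :
  traj2 f0 f1 UN x -> (1 <= i <= k)%nat -> (1 <= j <= k)%nat ->
  in_basin k d j (x 0 GA) -> in_basin k d i (x 0 GB) ->
  cv_t (fun t => x t GA) (pe j) /\ cv_t (fun t => x t GB) (pe i) /\
  cv_t (fun t => Util gA u0 u1 (UN (x t)) (x t)) (u1 * (gA * pe j + (1 - gA) * pe i)).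
Proof.
  intros Hx Hi Hj HA HB.
  assert (cvA : cv_t (fun t => x t GA) (pe j))
    by (apply (selected_as_UN_cv UN); auto; intros; apply beta_UN).
  assert (cvB : cv_t (fun t => x t GB) (pe i))
    by (apply (selected_as_UN_cv UN); auto; intros; apply beta_UN).
  split; [exact cvA | split; [exact cvB|]].
  replace (u1 * (gA * pe j + (1 - gA) * pe i))
    with (u1 * gA * pe j + u1 * (1 - gA) * pe i) by ring.
  apply (cv_t_lincomb _ _ _ _ _ _ _ cvA cvB); intros t _.
  rewrite Util_beta; destruct (beta_UN (x t) GA) as [-> ->], (beta_UN (x t) GB) as [-> ->].
  ring.
Qed.

Lemma AA1_limits gA u0 u1 i L x :
  (forall p, I01 p -> Rabs (f1 0 p - f0 0 p) <= L) -> L < 1 ->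
  traj2 f0 f1 AA1 x -> (1 <= i <= k)%nat ->
  x 0 GB <= x 0 GA -> in_basin k d i (x 0 GB) ->
  cv_t (fun t => x t GA) (pe i) /\ cv_t (fun t => x t GB) (pe i) /\
  cv_t (fun t => Util gA u0 u1 (AA1 (x t)) (x t)) (u1 * pe i).
Proof.
  intros Hbound HL Hx Hi H0 HB.
  destruct (gap_of_contracting_policy f0 f1 AA1 (1 - L) x
              (AA1_gap_contracting f0 f1 L Hbound ltac:(lra)) ltac:(lra) Hx H0)
    as [Hord cvGap].
  assert (HI : forall t, 0 <= t -> I01 (x t GA) /\ I01 (x t GB)).
  { intros t Ht; split; [apply (Hx GA) | apply (Hx GB)]; exact Ht. }
  assert (Hsel : forall t g, 0 <= t -> beta (AA1 (x t)) (x t) false g = 0 /\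
                                       beta (AA1 (x t)) (x t) true g = x t GB).
  { intros t g Ht; destruct (HI t Ht) as [HA' HB'].
    rewrite <- (Rmin_right (x t GA) (x t GB)) by (apply Hord, Ht).
    now apply beta_AA1. }
  assert (cvB : cv_t (fun t => x t GB) (pe i)).
  { apply (selected_as_UN_cv AA1); auto; intros t Ht; apply Hsel; lra. }
  split; [|split; [exact cvB|]].
  - replace (pe i) with (1 * 0 + 1 * pe i) by ring.
    apply (cv_t_lincomb _ _ _ _ _ _ _ cvGap cvB); intros t _; ring.
  - replace (u1 * pe i) with (u1 * pe i + 0 * pe i) by ring.
    apply (cv_t_lincomb _ _ _ _ _ _ _ cvB cvB); intros t Ht.
    rewrite Util_beta; destruct (Hsel t GA Ht) as [-> ->], (Hsel t GB Ht) as [-> ->].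
    ring.
Qed.

Lemma AA2_limits gA u0 u1 j L1 L0 L x :
  l1_Lipschitz f1 L1 -> l1_Lipschitz f0 L0 ->
  (forall D p, 0 <= D /\ D <= p /\ p <= 1 ->
     2 * (p * L1 + (1 - p) * L0) + Rabs (f1 D (p - D) - f0 D (p - D)) <= L) ->
  L < 1 -> traj2 f0 f1 AA2 x -> (1 <= j <= k)%nat ->
  x 0 GB <= x 0 GA -> in_basin k d j (x 0 GA) ->
  cv_t (fun t => x t GA) (pe j) /\ cv_t (fun t => x t GB) (pe j) /\
  cv_t (fun t => Util gA u0 u1 (AA2 (x t)) (x t)) (u1 * pe j).
Proof.
  intros Hlip1 Hlip0 Hmax HL Hx Hj H0 HA.
  destruct (gap_of_contracting_policy f0 f1 AA2 (1 - L) x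
              (AA2_gap_contracting f0 f1 L1 L0 L Hlip1 Hlip0 Hmax ltac:(lra)) ltac:(lra) Hx H0)
    as [Hord cvGap].
  assert (Hsel : forall t g, 0 <= t -> beta (AA2 (x t)) (x t) false g = x t GA - x t g /\
                                       beta (AA2 (x t)) (x t) true g = x t g).
  { intros t g Ht.
    rewrite <- (Rmax_left (x t GA) (x t GB)) by (apply Hord, Ht).
    apply beta_AA2; [apply (Hx GA) | apply (Hx GB)]; exact Ht. }
  assert (cvA : cv_t (fun t => x t GA) (pe j)).
  { apply (selected_as_UN_cv AA2); auto; intros t Ht.
    destruct (Hsel t GA ltac:(lra)) as [-> ->]; split; ring. }
  assert (cvB : cv_t (fun t => x t GB) (pe j)).
  { replace (pe j) with ((-1) * 0 + 1 * pe j) by ring.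
    apply (cv_t_lincomb _ _ _ _ _ _ _ cvGap cvA); intros t _; ring. }
  split; [exact cvA | split; [exact cvB|]].
  replace (u1 * pe j)
    with ((gA * u1 + (1 - gA) * u0) * pe j + (1 - gA) * (u1 - u0) * pe j) by ring.
  apply (cv_t_lincomb _ _ _ _ _ _ _ cvA cvB); intros t Ht.
  rewrite Util_beta; destruct (Hsel t GA Ht) as [-> ->], (Hsel t GB Ht) as [-> ->].
  ring.
Qed.

End Trajectories.

Theorem mainTheorem12
  (f0 f1 : R -> R -> R) (gA u0 u1 : R) (k : nat) (pe d : nat -> R)
  (i j : nat) (a0 b0 : R) :
  C1_square_to_I01 f0 -> C1_square_to_I01 f1 ->
  0 <= gA <= 1 -> u0 <= 0 -> 0 <= u1 ->
  k_equilibrium (fun p => p * f1 0 p + (1 - p) * f0 0 p) k pe d ->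
  (1 <= i <= k)%nat -> (1 <= j <= k)%nat ->
  b0 <= a0 -> in_basin k d i b0 -> in_basin k d j a0 ->
  (forall x, traj2 f0 f1 UN x -> x 0 GA = a0 -> x 0 GB = b0 ->
     cv_t (fun t => x t GA) (pe j) /\ cv_t (fun t => x t GB) (pe i) /\
     cv_t (fun t => Util gA u0 u1 (UN (x t)) (x t))
          (u1 * (gA * pe j + (1 - gA) * pe i)))
  /\
  (max_lt1 (fun p _ => I01 p) (fun p _ => Rabs (f1 0 p - f0 0 p)) ->
   forall x, traj2 f0 f1 AA1 x -> x 0 GA = a0 -> x 0 GB = b0 ->
     cv_t (fun t => x t GA) (pe i) /\ cv_t (fun t => x t GB) (pe i) /\
     cv_t (fun t => Util gA u0 u1 (AA1 (x t)) (x t)) (u1 * pe i) /\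
     u1 * pe i <= u1 * (gA * pe j + (1 - gA) * pe i))
  /\
  (forall L1 L0, l1_Lipschitz f1 L1 -> l1_Lipschitz f0 L0 ->
   max_lt1 (fun D p => 0 <= D /\ D <= p /\ p <= 1)
           (fun D p => 2 * (p * L1 + (1 - p) * L0)
                       + Rabs (f1 D (p - D) - f0 D (p - D))) ->
   forall x, traj2 f0 f1 AA2 x -> x 0 GA = a0 -> x 0 GB = b0 ->
     cv_t (fun t => x t GA) (pe j) /\ cv_t (fun t => x t GB) (pe j) /\
     cv_t (fun t => Util gA u0 u1 (AA2 (x t)) (x t)) (u1 * pe j) /\
     u1 * pe j >= u1 * (gA * pe j + (1 - gA) * pe i)).
Proof.
  intros _ _ HgA _ Hu1 Hequil Hi Hj Hab HbI HaI.
  assert (Hpe : pe i <= pe j).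
  { pose proof (basin_index_le f0 f1 k pe d Hequil i j a0 b0 Hi Hj Hab HbI HaI).
    apply (pe_nondecreasing f0 f1 k pe d Hequil); lia. }
  assert (Hgap : 0 <= u1 * (pe j - pe i)) by (apply Rmult_le_pos; lra).
  split; [|split].
  - intros x Hx <- <-; exact (UN_limits f0 f1 k pe d Hequil gA u0 u1 i j x Hx Hi Hj HaI HbI).
  - intros [L [HL [_ Hbound]]] x Hx HA HB; subst a0 b0.
    destruct (AA1_limits f0 f1 k pe d Hequil gA u0 u1 i L x
                (fun p Hp => Hbound p 0 Hp) HL Hx Hi Hab HbI) as [cvA [cvB cvU]].
    repeat split; auto; nra.
  - intros L1 L0 Hlip1 Hlip0 [L [HL [_ Hbound]]] x Hx HA HB; subst a0 b0.
    destruct (AA2_limits f0 f1 k pe d Hequil gA u0 u1 j L1 L0 L x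
                Hlip1 Hlip0 Hbound HL Hx Hj Hab HaI) as [cvA [cvB cvU]].
    repeat split; auto; nra.
Qed.
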